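(* Let $\Sigma^n\subset\mathbb{R}^{n+1}$ be a hyperplane through the origin and let $P\subset\Sigma$ be an $(n-1)$-dimensional linear subspace of $\Sigma$. Then each of the two open half-hyperplanes of $\Sigma\setminus P$ is stable.
   Context: Stability operator on a self-shrinker $\Sigma$: $Lf=\Delta f-\tfrac12\langle\vec x,\nabla f\rangle+(|A|^2+\tfrac12)f$. A Jacobi function is a function $u$ with $Lu=0$. A region $\Omega\subset\Sigma$ is stable if there exists a Jacobi function on $\Omega$ that is strictly positive on $\Omega$. *)

From Stdlib Require Import Reals Lra.
Open Scope R_scope.

(* Vectors of R^(n+1) are represented as functions nat -> R; only the
   coordinates 0..n are relevant (all notions below only look at them). *)
Definition vec := nat -> R.

Fixpoint sumR (k : nat) (f : nat -> R) : R :=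
  match k with
  | O => 0
  | S k' => sumR k' f + f k'
  end.

Definition dot (n : nat) (x y : vec) : R := sumR (S n) (fun i => x i * y i).

Definition vadd (x y : vec) : vec := fun i => x i + y i.
Definition vsub (x y : vec) : vec := fun i => x i - y i.
Definition vscale (t : R) (x : vec) : vec := fun i => t * x i.

Definition dist (n : nat) (x y : vec) : R := sqrt (dot n (vsub x y) (vsub x y)).

(* The hyperplane through the origin with normal nu: Sigma = nu^perp in R^(n+1) *)
Definition in_hyperplane (n : nat) (nu x : vec) : Prop := dot n nu x = 0.

Definition dir_deriv (f : vec -> R) (x v : vec) (l : R) : Prop :=
  derivable_pt_lim (fun t => f (vadd x (vscale t v))) 0 l.

Definition cont_on (n : nat) (Omega : vec -> Prop) (g : vec -> R) : Prop :=
  forall x, Omega x -> forall eps, 0 < eps ->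
    exists delta, 0 < delta /\
      forall y, Omega y -> dist n y x < delta -> Rabs (g y - g x) < eps.

(* e_0, ..., e_(n-1) is an orthonormal family of n vectors of Sigma
   (hence an orthonormal basis of the n-dimensional Sigma) *)
Definition orthonormal_frame (n : nat) (nu : vec) (e : nat -> vec) : Prop :=
  (forall i, (i < n)%nat -> in_hyperplane n nu (e i)) /\
  (forall i j, (i < n)%nat -> (j < n)%nat ->
     dot n (e i) (e j) = if Nat.eqb i j then 1 else 0).

(* Squared norm of the second fundamental form of the hyperplane Sigma:
   a hyperplane is totally geodesic, so |A|^2 = 0 identically. *)
Definition hyperplane_A2 (x : vec) : R := 0.

(* u is a (C^2) Jacobi function on the region Omega of Sigma:
   D1 x v is the derivative of u at x in the tangent direction v,
   D2 x v w the derivative of D1 . v in direction w (both continuous on Omega),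
   and L u = Delta u - 1/2 <x, grad u> + (|A|^2 + 1/2) u = 0 on Omega,
   where Delta u = sum_i D2 x e_i e_i for an orthonormal basis e of T Sigma
   and <x, grad u> = D1 x x (x is tangent to Sigma since Sigma is linear). *)
Definition jacobi_on (n : nat) (nu : vec) (Omega : vec -> Prop) (u : vec -> R) : Prop :=
  exists (D1 : vec -> vec -> R) (D2 : vec -> vec -> vec -> R),
    (forall x v, Omega x -> in_hyperplane n nu v -> dir_deriv u x v (D1 x v)) /\
    (forall x v w, Omega x -> in_hyperplane n nu v -> in_hyperplane n nu w ->
        dir_deriv (fun y => D1 y v) x w (D2 x v w)) /\
    (forall v, in_hyperplane n nu v -> cont_on n Omega (fun y => D1 y v)) /\
    (forall v w, in_hyperplane n nu v -> in_hyperplane n nu w ->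
        cont_on n Omega (fun y => D2 y v w)) /\
    (forall x, Omega x -> forall e, orthonormal_frame n nu e ->
        sumR n (fun i => D2 x (e i) (e i)) - / 2 * D1 x x
          + (hyperplane_A2 x + / 2) * u x = 0).

Definition stable (n : nat) (nu : vec) (Omega : vec -> Prop) : Prop :=
  exists u : vec -> R, jacobi_on n nu Omega u /\ (forall x, Omega x -> 0 < u x).

From Stdlib Require Import Reals Lra.
Open Scope R_scope.

(* A hyperplane Sigma through the origin is totally geodesic
   (|A|^2 = 0), so its stability operator is L u = Delta u - 1/2 <x, grad u> + 1/2 u.
   Every linear function u(x) = <a, x> is a Jacobi function on all of Sigma:
   its Hessian vanishes, so Delta u = 0, and by Euler's identity
   <x, grad u> = <a, x> = u(x), so the last two terms cancel.
   On the half-hyperplane {<eta, x> > 0} the function <eta, x> is strictly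
   positive, and on {<eta, x> < 0} so is <-eta, x>; both halves are stable. *)

Lemma sumR_ext (k : nat) (f g : nat -> R) :
  (forall i, f i = g i) -> sumR k f = sumR k g.
Proof. intros Hfg; induction k as [|k IH]; simpl; [ring | rewrite IH, Hfg; ring]. Qed.

Lemma sumR_add_scal (k : nat) (t : R) (f g : nat -> R) :
  sumR k (fun i => f i + t * g i) = sumR k f + t * sumR k g.
Proof. induction k as [|k IH]; simpl; [ring | rewrite IH; ring]. Qed.

Lemma sumR_scal (k : nat) (t : R) (f : nat -> R) :
  sumR k (fun i => t * f i) = t * sumR k f.
Proof. induction k as [|k IH]; simpl; [ring | rewrite IH; ring]. Qed.

Lemma sumR_zero (k : nat) : sumR k (fun _ => 0) = 0.
Proof. induction k as [|k IH]; simpl; [ring | rewrite IH; ring]. Qed.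

(* The inner product is linear in each argument; in the second one we only
   need it along a line x + t v, which is where directional derivatives live. *)
Lemma dot_line (n : nat) (a x v : vec) (t : R) :
  dot n a (vadd x (vscale t v)) = dot n a x + t * dot n a v.
Proof.
  unfold dot, vadd, vscale; rewrite <- sumR_add_scal.
  apply sumR_ext; intros; ring.
Qed.

Lemma dot_scal_l (n : nat) (t : R) (a x : vec) :
  dot n (vscale t a) x = t * dot n a x.
Proof.
  unfold dot, vscale; rewrite <- sumR_scal.
  apply sumR_ext; intros; ring.
Qed.

Lemma derivable_pt_lim_affine (c d : R) :
  derivable_pt_lim (fun t => c + t * d) 0 d.
Proof.
  assert (Hd := derivable_pt_lim_plus (fun _ => c) (fun t => t * d) 0 0 (1 * d)
    (derivable_pt_lim_const c 0)
    (derivable_pt_lim_scal_right id 0 1 d (derivable_pt_lim_id 0))).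
  replace (0 + 1 * d) with d in Hd by ring.
  exact Hd.
Qed.

Lemma dir_deriv_dot (n : nat) (a x v : vec) :
  dir_deriv (dot n a) x v (dot n a v).
Proof.
  unfold dir_deriv.
  apply derivable_pt_lim_ext with (f := fun t => dot n a x + t * dot n a v).
  - intros t; symmetry; apply dot_line.
  - apply derivable_pt_lim_affine.
Qed.

Lemma dir_deriv_const (c : R) (x v : vec) : dir_deriv (fun _ => c) x v 0.
Proof. apply derivable_pt_lim_const. Qed.

Lemma cont_on_const (n : nat) (Omega : vec -> Prop) (c : R) :
  cont_on n Omega (fun _ => c).
Proof.
  intros x _ eps Heps; exists 1; split; [lra |].
  intros y _ _; rewrite Rminus_diag, Rabs_R0; exact Heps.
Qed.

(* Main lemma: on a hyperplane, every linear function x |-> <a, x> is a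
   Jacobi function on every region, with gradient D1 x v = <a, v> and Hessian
   D2 = 0.  The Jacobi equation reduces to Euler's identity D1 x x = u x. *)
Lemma jacobi_on_linear (n : nat) (nu a : vec) (Omega : vec -> Prop) :
  jacobi_on n nu Omega (dot n a).
Proof.
  exists (fun _ v => dot n a v), (fun _ _ _ => 0).
  split; [| split; [| split; [| split]]].
  - intros x v _ _; apply dir_deriv_dot.
  - intros x v w _ _ _; apply dir_deriv_const.
  - intros v _; apply cont_on_const.
  - intros v w _ _; apply cont_on_const.
  - intros x _ e _; rewrite sumR_zero; unfold hyperplane_A2; ring.
Qed.

Lemma stable_of_pos_linear (n : nat) (nu a : vec) (Omega : vec -> Prop) :
  (forall x, Omega x -> 0 < dot n a x) -> stable n nu Omega.
Proof.
  intros Hpos; exists (dot n a); split; [apply jacobi_on_linear | exact Hpos].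
Qed.

Theorem proposition4p1 (n : nat) (hn : (1 <= n)%nat) (nu eta : vec)
    (hnu : 0 < dot n nu nu) (heta_in : in_hyperplane n nu eta)
    (heta : 0 < dot n eta eta) :
  stable n nu (fun x => in_hyperplane n nu x /\ 0 < dot n eta x) /\
  stable n nu (fun x => in_hyperplane n nu x /\ dot n eta x < 0).
Proof.
  split.
  - apply (stable_of_pos_linear n nu eta); intros x [_ Hx]; exact Hx.
  - apply (stable_of_pos_linear n nu (vscale (-1) eta)); intros x [_ Hx].
    rewrite dot_scal_l; lra.
Qed.
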